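(* Let $\Phi_U$ be a pmf on a finite set $\mathcal U$ and $\Phi_{V|U}$ a channel to a finite set $\mathcal V$, with induced $\Phi_V$. Let $\mathcal B^{(n)}=\{u^n(j)\}_{j=1}^{2^{nR}}$ be a random codebook whose codewords are drawn mutually independently, each i.i.d. according to $\Phi_U$, and let $P_{V^n}(v^n)=2^{-nR}\sum_{j}\prod_{t=1}^n\Phi_{V|U}(v_t|u_t(j))$ be the induced output distribution, with desired distribution $Q_{V^n}=\prod_{t=1}^n\Phi_V(v_t)$. If $R>I_\Phi(U;V)$ then $\lim_{n\to\infty}\mathbf E\|P_{V^n}-Q_{V^n}\|_{TV}=0$, where the expectation is over the random codebook. Moreover, for every $n$, $$\mathbf E\|P_{V^n}-Q_{V^n}\|_{TV}\le \tfrac32\,2^{-\gamma n},$$ where $$\gamma=\max_{\beta\ge0,\beta'\ge0,(\beta,\beta')\neq(0,0)}\frac{1}{2\beta+\beta'}\Big(-\beta'\log\mathbf E_\Phi Z^{\beta}-2\beta\log \mathbf E_{\Phi_V}\sqrt{\mathbf E_{\Phi_{U|V}}Z^{1-\beta'}}\Big),\qquad Z=2^{-R}\frac{\Phi_{U,V}(U,V)}{\Phi_U(U)\Phi_V(V)}.$$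
   Context: Total variation $\|P-Q\|_{TV}=\frac12\sum|P-Q|$. All logarithms are base 2 and $R$ is in bits ($2^{nR}$ treated as an integer). $\mathbf E_\Phi$ is expectation under $\Phi_{U,V}=\Phi_U\Phi_{V|U}$; in $\mathbf E_{\Phi_V}\sqrt{\mathbf E_{\Phi_{U|V}}(\cdot)}$ the inner expectation is over $U$ given $V$ and the outer over $V$. *)

From Stdlib Require Import Reals.
From mathcomp Require Import all_boot.
Set Implicit Arguments. Unset Strict Implicit. Unset Printing Implicit Defensive.

Local Open Scope R_scope.

Definition rsum (T : finType) (f : T -> R) : R := \big[Rplus/0]_(x : T) f x.
Definition rprod (T : finType) (f : T -> R) : R := \big[Rmult/1]_(x : T) f x.

Definition log2 (x : R) : R := ln x / ln 2.

(* ceiling of a real, as an integer *)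
Definition ceilZ (x : R) : Z := (- (up (- x) - 1))%Z.

(* codebook size 2^{nR}, rounded up to an integer *)
Definition cbsize (R0 : R) (n : nat) : nat := Z.to_nat (ceilZ (Rpower 2 (INR n * R0))).

Section Defs.
Variables (U V : finType) (pU : U -> R) (W : U -> V -> R).

Definition is_pmf (T : finType) (p : T -> R) : Prop :=
  (forall x, 0 <= p x) /\ rsum p = 1.

Definition is_channel : Prop := forall u, is_pmf (W u).

Definition pUV (u : U) (v : V) : R := pU u * W u v.
Definition pV (v : V) : R := rsum (fun u => pUV u v).

Definition mutinfo : R :=
  rsum (fun u => rsum (fun v =>
    if Rlt_dec 0 (pUV u v) then pUV u v * log2 (pUV u v / (pU u * pV v)) else 0)).

Definition Zrv (R0 : R) (u : U) (v : V) : R :=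
  Rpower 2 (- R0) * (pUV u v / (pU u * pV v)).

Definition EZpow (R0 b : R) : R :=
  rsum (fun u => rsum (fun v => pUV u v * Rpower (Zrv R0 u v) b)).

Definition ESqrtZ (R0 b' : R) : R :=
  rsum (fun v => pV v *
    sqrt (rsum (fun u => (pUV u v / pV v) * Rpower (Zrv R0 u v) (1 - b')))).

(* the objective whose max over (beta,beta') is gamma *)
Definition gammaf (R0 b b' : R) : R :=
  / (2 * b + b') * (- b' * log2 (EZpow R0 b) - 2 * b * log2 (ESqrtZ R0 b')).

Definition codebook (M n : nat) := {ffun 'I_M -> {ffun 'I_n -> U}}.

Definition cbprob (M n : nat) (c : codebook M n) : R :=
  \big[Rmult/1]_(j < M) \big[Rmult/1]_(t < n) pU (c j t).

Definition PVn (M n : nat) (c : codebook M n) (v : {ffun 'I_n -> V}) : R :=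
  / INR M * \big[Rplus/0]_(j < M) \big[Rmult/1]_(t < n) W (c j t) (v t).

Definition QVn (n : nat) (v : {ffun 'I_n -> V}) : R :=
  \big[Rmult/1]_(t < n) pV (v t).

Definition tvPQ (M n : nat) (c : codebook M n) : R :=
  / 2 * rsum (fun v : {ffun 'I_n -> V} => Rabs (PVn c v - QVn v)).

Definition ETV (R0 : R) (n : nat) : R :=
  rsum (fun c : codebook (cbsize R0 n) n => cbprob c * tvPQ c).

End Defs.

From HB Require Import structures.
From Stdlib Require Import Reals Lra ZArith Classical FunctionalExtensionality.
From mathcomp Require Import all_boot.
Set Implicit Arguments. Unset Strict Implicit. Unset Printing Implicit Defensive.
Open Scope R_scope.

(* With M >= 2^{nR} codewords, the output distribution is the empirical
   average P(y) = M^-1 Σ_j wn(c_j, y) of the channel likelihood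
   wn(x, y) = Π_t W(x_t, y_t) over i.i.d. codewords c_j ~ Φ_U^n, whose mean is
   Q(y).  For each y split wn according to whether the product density
   z(x, y) = Π_t Z(x_t, y_t) exceeds a threshold τ.  The part above τ is
   bounded through its mean (Markov: 1{z > τ} <= (z/τ)^β), the part below τ
   through its standard deviation (Cauchy–Schwarz and the variance of an
   i.i.d. sum, then wn^2/M <= z Q wn and 1{z <= τ} z <= τ^β' z^{1-β'}).  Both
   moments factorize over the letters, so
     E TV <= (E Z^β)^n τ^{-β} + ½ τ^{β'/2} (E_V sqrt(E_{U|V} Z^{1-β'}))^n,
   and balancing the two terms in τ gives (3/2) 2^{-γ n}.  For the limit,
   β ↦ E Z^β equals 1 at β = 0 with slope ln 2 (I(U;V) - R) < 0, so some
   β > 0 has E Z^β < 1; then γ(β, 1) > 0 and the bound decays geometrically. *)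

Lemma Rplus_associative : associative Rplus. Proof. by move=> x y z; rewrite Rplus_assoc. Qed.
Lemma Rmult_associative : associative Rmult. Proof. by move=> x y z; rewrite Rmult_assoc. Qed.
HB.instance Definition _ := Monoid.isComLaw.Build R 0 Rplus Rplus_associative Rplus_comm Rplus_0_l.
HB.instance Definition _ := Monoid.isComLaw.Build R 1 Rmult Rmult_associative Rmult_comm Rmult_1_l.
HB.instance Definition _ := Monoid.isMulLaw.Build R 0 Rmult Rmult_0_l Rmult_0_r.
HB.instance Definition _ := Monoid.isAddLaw.Build R Rmult Rplus Rmult_plus_distr_r Rmult_plus_distr_l.

Section RealBigops.
Variable I : Type.
Implicit Types (r : seq I) (P : pred I) (F G : I -> R).

Lemma Rsum_le r P F G : (forall i, P i -> F i <= G i) ->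
  \big[Rplus/0]_(i <- r | P i) F i <= \big[Rplus/0]_(i <- r | P i) G i.
Proof. by move=> h; apply: (big_ind2 (fun a b => a <= b)) => // *; lra. Qed.

Lemma Rsum_ge0 r P F : (forall i, P i -> 0 <= F i) -> 0 <= \big[Rplus/0]_(i <- r | P i) F i.
Proof. by move=> h; apply: (big_ind (fun a => 0 <= a)) => // *; lra. Qed.

Lemma Rprod_ge0 r P F : (forall i, P i -> 0 <= F i) -> 0 <= \big[Rmult/1]_(i <- r | P i) F i.
Proof. by move=> h; apply: (big_ind (fun a => 0 <= a)) => // *; nra. Qed.

Lemma Rprod_gt0 r P F : (forall i, P i -> 0 < F i) -> 0 < \big[Rmult/1]_(i <- r | P i) F i.
Proof. by move=> h; apply: (big_ind (fun a => 0 < a)) => // *; nra. Qed.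

Lemma sqrt_Rprod r P F : (forall i, P i -> 0 <= F i) ->
  sqrt (\big[Rmult/1]_(i <- r | P i) F i) = \big[Rmult/1]_(i <- r | P i) sqrt (F i).
Proof.
move=> h.
suff [] : 0 <= \big[Rmult/1]_(i <- r | P i) F i /\
          sqrt (\big[Rmult/1]_(i <- r | P i) F i) = \big[Rmult/1]_(i <- r | P i) sqrt (F i) by [].
apply: (big_rec2 (fun a b => 0 <= a /\ sqrt a = b)) => [|i a b Pi [a0 <-]].
  by split; [lra | exact: sqrt_1].
by have := h i Pi; split; [nra | rewrite sqrt_mult].
Qed.

Lemma Rpower_Rprod r P F b : (forall i, P i -> 0 < F i) ->
  Rpower (\big[Rmult/1]_(i <- r | P i) F i) b = \big[Rmult/1]_(i <- r | P i) Rpower (F i) b.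
Proof.
move=> h.
suff [] : 0 < \big[Rmult/1]_(i <- r | P i) F i /\
   Rpower (\big[Rmult/1]_(i <- r | P i) F i) b = \big[Rmult/1]_(i <- r | P i) Rpower (F i) b by [].
apply: (big_rec2 (fun a c => 0 < a /\ Rpower a b = c)) => [|i a c Pi [a0 <-]].
  by split; [lra | rewrite /Rpower ln_1 Rmult_0_r exp_0].
by have := h i Pi; split; [nra | rewrite Rpower_mult_distr].
Qed.

Lemma Rprod_const n (a : R) : \big[Rmult/1]_(t < n) a = a ^ n.
Proof. by elim: n => [|n IH]; rewrite ?big_ord0 // big_ord_recr /= IH Rmult_comm. Qed.

Lemma Rsum_const n (a : R) : \big[Rplus/0]_(t < n) a = INR n * a.
Proof.
elim: n => [|n IH]; first by rewrite big_ord0 /=; ring.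
by rewrite big_ord_recr IH S_INR /=; ring.
Qed.

End RealBigops.

Section RealFinBigops.
Variable T : finType.
Implicit Types (p f g : T -> R).

Lemma Rsum_sub f g :
  \big[Rplus/0]_(x : T) (f x - g x) = \big[Rplus/0]_(x : T) f x - \big[Rplus/0]_(x : T) g x.
Proof.
transitivity (\big[Rplus/0]_(x : T) f x + (-1) * \big[Rplus/0]_(x : T) g x); last ring.
by rewrite big_distrr -big_split; apply: eq_bigr => x _ /=; ring.
Qed.

Lemma Rsum_term_le f x0 : (forall x, 0 <= f x) -> f x0 <= \big[Rplus/0]_(x : T) f x.
Proof.
move=> h; rewrite (bigD1 x0) //=.
have : 0 <= \big[Rplus/0]_(x | x != x0) f x by apply: Rsum_ge0.
lra.
Qed.

Lemma Rprod_eq0 f x0 : f x0 = 0 -> \big[Rmult/1]_(x : T) f x = 0.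
Proof. by move=> h; rewrite (bigD1 x0) //= h Rmult_0_l. Qed.

Lemma Rprod_gt0_factor f : (forall x, 0 <= f x) ->
  0 < \big[Rmult/1]_(x : T) f x -> forall x, 0 < f x.
Proof.
move=> h hp x; case: (Rle_lt_or_eq_dec _ _ (h x)) => // e.
by rewrite (Rprod_eq0 (esym e)) in hp; lra.
Qed.

(* Π p · (Π z)^b = Π (p z^b) whenever z is positive where p is: factors with
   p = 0 kill both sides, so the power is only ever taken of a positive product. *)
Lemma Rprod_mul_Rpower p (z : T -> R) b : (forall x, 0 <= p x) -> (forall x, 0 < p x -> 0 < z x) ->
  \big[Rmult/1]_(x : T) p x * Rpower (\big[Rmult/1]_(x : T) z x) b
  = \big[Rmult/1]_(x : T) (p x * Rpower (z x) b).
Proof.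
move=> p0 pz.
case: (classic (exists x, p x = 0)) => [[x0 e]|ne].
  by rewrite (Rprod_eq0 e) Rmult_0_l (@Rprod_eq0 _ x0) // e Rmult_0_l.
have pp x : 0 < p x.
  by case: (Rle_lt_or_eq_dec _ _ (p0 x)) => // e; case: ne; exists x.
by rewrite Rpower_Rprod ?big_split // => x _; apply: pz.
Qed.

Lemma var_expand p f m : \big[Rplus/0]_(x : T) p x = 1 ->
  \big[Rplus/0]_(x : T) (p x * (f x - m) ^ 2) =
  \big[Rplus/0]_(x : T) (p x * f x ^ 2) - 2 * m * \big[Rplus/0]_(x : T) (p x * f x) + m ^ 2.
Proof.
move=> hp.
rewrite (eq_bigr (fun x => p x * f x ^ 2 + ((- 2 * m) * (p x * f x) + m ^ 2 * p x))); last first.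
  by move=> x _; ring.
rewrite !big_split /= -!big_distrr /= hp; ring.
Qed.

Lemma E_abs_le_sqrt_E_sq p f : (forall x, 0 <= p x) -> \big[Rplus/0]_(x : T) p x = 1 ->
  \big[Rplus/0]_(x : T) (p x * Rabs (f x)) <= sqrt (\big[Rplus/0]_(x : T) (p x * f x ^ 2)).
Proof.
move=> p0 hp.
set m := \big[Rplus/0]_(x : T) (p x * Rabs (f x)).
have m0 : 0 <= m by apply: Rsum_ge0 => x _; have := Rabs_pos (f x); have := p0 x; nra.
have var0 : 0 <= \big[Rplus/0]_(x : T) (p x * (Rabs (f x) - m) ^ 2).
  by apply: Rsum_ge0 => x _; have := p0 x; have := pow2_ge_0 (Rabs (f x) - m); nra.
have abs_sq : \big[Rplus/0]_(x : T) (p x * Rabs (f x) ^ 2) = \big[Rplus/0]_(x : T) (p x * f x ^ 2).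
  by apply: eq_bigr => x _; rewrite -Rsqr_pow2 -Rsqr_abs Rsqr_pow2.
rewrite (var_expand _ m hp) -/m abs_sq in var0.
rewrite -(sqrt_pow2 m m0); apply: sqrt_le_1_alt; nra.
Qed.

End RealFinBigops.

Section RandomCodebook.
Variables (X : finType) (px : X -> R) (M : nat).
Hypotheses (px0 : forall x, 0 <= px x) (px1 : \big[Rplus/0]_(x : X) px x = 1).

Definition cwprob (c : {ffun 'I_M -> X}) : R := \big[Rmult/1]_(j < M) px (c j).
Definition Ecb (F : {ffun 'I_M -> X} -> R) : R :=
  \big[Rplus/0]_(c : {ffun 'I_M -> X}) (cwprob c * F c).

Lemma cwprob_ge0 c : 0 <= cwprob c. Proof. exact: Rprod_ge0. Qed.

Lemma cwprob_sum1 : \big[Rplus/0]_(c : {ffun 'I_M -> X}) cwprob c = 1.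
Proof.
rewrite /cwprob -(bigA_distr_bigA (fun (j : 'I_M) (x : X) => px x)).
by rewrite (eq_bigr (fun _ => 1)) ?big1_eq.
Qed.

Lemma Ecb_prod (G : 'I_M -> X -> R) :
  Ecb (fun c => \big[Rmult/1]_(j < M) G j (c j))
  = \big[Rmult/1]_(j < M) \big[Rplus/0]_(x : X) (px x * G j x).
Proof. by rewrite bigA_distr_bigA; apply: eq_bigr => c _; rewrite /cwprob -big_split. Qed.

Lemma Ecb_const a : Ecb (fun _ => a) = a.
Proof. by rewrite /Ecb -big_distrl /= cwprob_sum1 Rmult_1_l. Qed.

Lemma Ecb_add F G : Ecb (fun c => F c + G c) = Ecb F + Ecb G.
Proof. by rewrite /Ecb -big_split; apply: eq_bigr => c _ /=; ring. Qed.

Lemma Ecb_scal a F : Ecb (fun c => a * F c) = a * Ecb F.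
Proof. by rewrite /Ecb big_distrr; apply: eq_bigr => c _ /=; ring. Qed.

Lemma Ecb_le F G : (forall c, F c <= G c) -> Ecb F <= Ecb G.
Proof. by move=> h; apply: Rsum_le => c _; have := cwprob_ge0 c; have := h c; nra. Qed.

Lemma Ecb_sum (F : 'I_M -> {ffun 'I_M -> X} -> R) :
  Ecb (fun c => \big[Rplus/0]_(j < M) F j c) = \big[Rplus/0]_(j < M) Ecb (F j).
Proof. by rewrite /Ecb; under eq_bigr do rewrite big_distrr; exact: exchange_big. Qed.

Lemma Ecb_coord f j0 : Ecb (fun c => f (c j0)) = \big[Rplus/0]_(x : X) (px x * f x).
Proof.
have := Ecb_prod (fun j x => if j == j0 then f x else 1).
rewrite (eq_bigr (fun j => if j == j0 then \big[Rplus/0]_(x : X) (px x * f x) else 1)); last first.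
  move=> j _; case: (j == j0) => //; rewrite -[RHS]px1; apply: eq_bigr => x _; ring.
rewrite -big_mkcond big_pred1_eq => <-; apply: eq_bigr => c _; congr (_ * _).
by rewrite -big_mkcond big_pred1_eq.
Qed.

Lemma Ecb_coord2 f g j0 k0 : j0 != k0 ->
  Ecb (fun c => f (c j0) * g (c k0))
  = \big[Rplus/0]_(x : X) (px x * f x) * \big[Rplus/0]_(x : X) (px x * g x).
Proof.
move=> jk.
have pick2 (F G : 'I_M -> R) :
    \big[Rmult/1]_(j < M) (if j == j0 then F j else if j == k0 then G j else 1) = F j0 * G k0.
  rewrite (bigD1 j0) //= eqxx; congr (_ * _).
  rewrite (eq_bigr (fun j => if j == k0 then G j else 1)); last by move=> j /negbTE ->.
  rewrite (bigD1 k0) /=; last by rewrite eq_sym.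
  by rewrite eqxx big1 ?Rmult_1_r // => i /andP [_ /negbTE ->].
have := Ecb_prod (fun j x => if j == j0 then f x else if j == k0 then g x else 1).
rewrite (eq_bigr (fun j => if j == j0 then \big[Rplus/0]_(x : X) (px x * f x)
    else if j == k0 then \big[Rplus/0]_(x : X) (px x * g x) else 1)); last first.
  move=> j _; case: (j == j0) => //; case: (j == k0) => //.
  rewrite -[RHS]px1; apply: eq_bigr => x _; ring.
rewrite pick2 => <-; apply: eq_bigr => c _; congr (_ * _).
by rewrite (pick2 (fun i => f (c i)) (fun i => g (c i))).
Qed.

(* Second moment of a sum of M i.i.d. centered variables: only the diagonal
   terms survive. *)
Lemma Ecb_centered_sum_sq (d : X -> R) : \big[Rplus/0]_(x : X) (px x * d x) = 0 ->
  Ecb (fun c => (\big[Rplus/0]_(j < M) d (c j)) ^ 2)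
  = INR M * \big[Rplus/0]_(x : X) (px x * d x ^ 2).
Proof.
move=> hd.
have -> : (fun c : {ffun 'I_M -> X} => (\big[Rplus/0]_(j < M) d (c j)) ^ 2) = fun c : {ffun 'I_M -> X} =>
    \big[Rplus/0]_(j < M) \big[Rplus/0]_(k < M) (d (c j) * d (c k)).
  by apply: functional_extensionality => c; rewrite /= Rmult_1_r big_distrlr.
rewrite (Ecb_sum (fun j (c : {ffun 'I_M -> X}) => \big[Rplus/0]_(k < M) (d (c j) * d (c k)))) -Rsum_const.
apply: eq_bigr => j _.
rewrite (Ecb_sum (fun k (c : {ffun 'I_M -> X}) => d (c j) * d (c k))).
rewrite (eq_bigr (fun k => if k == j then \big[Rplus/0]_(x : X) (px x * d x ^ 2) else 0)).
  by rewrite -big_mkcond big_pred1_eq.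
move=> k _; case: eqP => [->|/eqP kj].
  by rewrite (Ecb_coord (fun x => d x * d x)); apply: eq_bigr => x _; ring.
by rewrite (Ecb_coord2 d d); [rewrite hd; ring | rewrite eq_sym].
Qed.

End RandomCodebook.

(* The core covering estimate: the empirical average of a likelihood over the
   codebook deviates from its mean by little in expectation, once the
   likelihood is split into a "bulk" part controlled by its second moment and
   a nonnegative "tail" part controlled by its first moment. *)
Section CoveringBound.
Variables (X : finType) (px : X -> R) (M : nat).
Hypotheses (px0 : forall x, 0 <= px x) (px1 : \big[Rplus/0]_(x : X) px x = 1) (M0 : 0 < INR M).

Notation avg g c := (/ INR M * \big[Rplus/0]_(j < M) g (c j)).

(* Deviation of an empirical mean: E|avg g - E g| <= sqrt(E g^2 / M),
   by Cauchy–Schwarz and the variance of an i.i.d. sum. *)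
Lemma Ecb_abs_dev_avg (g : X -> R) :
  Ecb px (fun c : {ffun 'I_M -> X} => Rabs (avg g c - \big[Rplus/0]_(x : X) (px x * g x)))
  <= sqrt (/ INR M * \big[Rplus/0]_(x : X) (px x * g x ^ 2)).
Proof.
set m := \big[Rplus/0]_(x : X) (px x * g x).
have CS := E_abs_le_sqrt_E_sq (fun c : {ffun 'I_M -> X} => avg g c - m)
  (cwprob_ge0 px0 (M := M)) (cwprob_sum1 M px1).
apply: Rle_trans CS _; apply: sqrt_le_1_alt.
have centered c : (avg g c - m) ^ 2 = (/ INR M) ^ 2 * (\big[Rplus/0]_(j < M) (g (c j) - m)) ^ 2.
  have -> : \big[Rplus/0]_(j < M) (g (c j) - m) = \big[Rplus/0]_(j < M) g (c j) - INR M * m.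
    by rewrite Rsum_sub Rsum_const.
  by field; lra.
have mean0 : \big[Rplus/0]_(x : X) (px x * (g x - m)) = 0.
  rewrite (eq_bigr (fun x => px x * g x - m * px x)); last by move=> x _; ring.
  by rewrite Rsum_sub -big_distrr /= px1 -/m; ring.
apply: Rle_trans (_ : Ecb px (fun c : {ffun 'I_M -> X} =>
    (/ INR M) ^ 2 * (\big[Rplus/0]_(j < M) (g (c j) - m)) ^ 2) <= _).
  by apply: Req_le; apply: eq_bigr => c _; rewrite centered.
rewrite Ecb_scal (Ecb_centered_sum_sq M px1 mean0) (var_expand g m px1) -/m.
have := pow2_ge_0 m.
have : 0 <= \big[Rplus/0]_(x : X) (px x * g x ^ 2).
  by apply: Rsum_ge0 => x _; have := px0 x; have := pow2_ge_0 (g x); nra.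
have iM : 0 < / INR M by apply: Rinv_0_lt_compat.
move: (\big[Rplus/0]_(x : X) (px x * g x ^ 2)) => s s0 m0.
have -> : (/ INR M) ^ 2 * (INR M * (s - 2 * m * m + m ^ 2)) = / INR M * (s - m ^ 2) by field; lra.
nra.
Qed.

Lemma Ecb_abs_dev_split (g h : X -> R) : (forall x, 0 <= h x) ->
  Ecb px (fun c : {ffun 'I_M -> X} => Rabs (avg (fun x => g x + h x) c
     - (\big[Rplus/0]_(x : X) (px x * g x) + \big[Rplus/0]_(x : X) (px x * h x))))
  <= 2 * \big[Rplus/0]_(x : X) (px x * h x)
     + sqrt (/ INR M * \big[Rplus/0]_(x : X) (px x * g x ^ 2)).
Proof.
move=> h0.
set m1 := \big[Rplus/0]_(x : X) (px x * g x).
set m2 := \big[Rplus/0]_(x : X) (px x * h x).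
have m2_0 : 0 <= m2 by apply: Rsum_ge0 => x _; have := h0 x; have := px0 x; nra.
have triangle (c : {ffun 'I_M -> X}) :
    Rabs (avg (fun x => g x + h x) c - (m1 + m2)) <= Rabs (avg g c - m1) + avg h c + m2.
  have : 0 <= avg h c by apply: Rmult_le_pos; [apply/Rlt_le/Rinv_0_lt_compat | apply: Rsum_ge0].
  rewrite big_split /= Rmult_plus_distr_l.
  by move: (avg g c) (avg h c) => G H; split_Rabs; lra.
have mean_tail : Ecb px (fun c : {ffun 'I_M -> X} => avg h c) = m2.
  rewrite Ecb_scal (Ecb_sum px (fun j (c : {ffun 'I_M -> X}) => h (c j))).
  rewrite (eq_bigr (fun _ => m2)) ?Rsum_const; first by field; lra.
  by move=> j _; rewrite (Ecb_coord px1 h j).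
apply: Rle_trans (Ecb_le px0 triangle) _.
rewrite !Ecb_add (Ecb_const M px1) mean_tail.
have := Ecb_abs_dev_avg g; rewrite -/m1; lra.
Qed.

Lemma expected_tv_split (Y : finType) (w : X -> Y -> R) (q : Y -> R) (A : X -> Y -> bool) :
  (forall x y, 0 <= w x y) -> (forall y, q y = \big[Rplus/0]_(x : X) (px x * w x y)) ->
  Ecb px (fun c : {ffun 'I_M -> X} =>
     / 2 * \big[Rplus/0]_(y : Y) Rabs (avg (fun x => w x y) c - q y))
  <= \big[Rplus/0]_(x : X) \big[Rplus/0]_(y : Y) (if A x y then 0 else px x * w x y)
     + / 2 * \big[Rplus/0]_(y : Y)
         sqrt (/ INR M * \big[Rplus/0]_(x : X) (if A x y then px x * w x y ^ 2 else 0)).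
Proof.
move=> w0 hq.
pose g y x := if A x y then w x y else 0.
pose h y x := if A x y then 0 else w x y.
have per_output y :
    Ecb px (fun c : {ffun 'I_M -> X} => Rabs (avg (fun x => w x y) c - q y))
    <= 2 * \big[Rplus/0]_(x : X) (px x * h y x)
       + sqrt (/ INR M * \big[Rplus/0]_(x : X) (px x * g y x ^ 2)).
  have tail0 x : 0 <= h y x by rewrite /h; case: (A _ _) => //; lra.
  apply: Rle_trans _ (@Ecb_abs_dev_split (g y) (h y) tail0); apply: Req_le; apply: eq_bigr => c _; congr (_ * Rabs (_ * _ - _)).
    by apply: eq_bigr => j _; rewrite /g /h /=; case: (A _ _); ring.
  by rewrite hq -big_split; apply: eq_bigr => x _; rewrite /g /h /=; case: (A _ _); ring.
have swap : Ecb px (fun c : {ffun 'I_M -> X} =>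
      / 2 * \big[Rplus/0]_(y : Y) Rabs (avg (fun x => w x y) c - q y))
    = / 2 * \big[Rplus/0]_(y : Y)
      Ecb px (fun c : {ffun 'I_M -> X} => Rabs (avg (fun x => w x y) c - q y)).
  rewrite Ecb_scal /Ecb; congr (_ * _).
  by rewrite [LHS](eq_bigr _ (fun c _ => big_distrr _ _ _)) exchange_big.
rewrite swap; apply: Rle_trans (_ : / 2 * \big[Rplus/0]_(y : Y)
    (2 * \big[Rplus/0]_(x : X) (px x * h y x)
     + sqrt (/ INR M * \big[Rplus/0]_(x : X) (px x * g y x ^ 2))) <= _).
  by apply: Rmult_le_compat_l; [lra | apply: Rsum_le => y _; apply: per_output].
rewrite big_split /= Rmult_plus_distr_l -big_distrr /= exchange_big /=.
apply: Rplus_le_compat; apply: Req_le.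
  rewrite -Rmult_assoc Rinv_l ?Rmult_1_l; last lra.
  by apply: eq_bigr => x _; apply: eq_bigr => y _; rewrite /h /=; case: (A _ _); ring.
congr (_ * _); apply: eq_bigr => y _; congr (sqrt (_ * _)).
by apply: eq_bigr => x _; rewrite /g /=; case: (A _ _); ring.
Qed.

End CoveringBound.

Lemma Rpower_gt0 a b : 0 < Rpower a b.
Proof. exact: exp_pos. Qed.

Lemma Rpower_0_r x : Rpower x 0 = 1.
Proof. by rewrite /Rpower Rmult_0_l exp_0. Qed.

Lemma ln2_gt0 : 0 < ln 2.
Proof. by have := ln_lt_2; lra. Qed.

Section SingleLetter.
Variables (U V : finType) (pU : U -> R) (W : U -> V -> R) (R0 : R).
Hypotheses (hpU : is_pmf pU) (hW : is_channel W).

Local Notation pUV := (pUV pU W).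
Local Notation pV := (pV pU W).
Local Notation Z := (Zrv pU W R0).

Lemma pU_ge0 u : 0 <= pU u. Proof. by case: hpU. Qed.
Lemma W_ge0 u v : 0 <= W u v. Proof. by case: (hW u). Qed.
Lemma pUV_ge0 u v : 0 <= pUV u v. Proof. by have := pU_ge0 u; have := W_ge0 u v; rewrite /pUV; nra. Qed.
Lemma pV_ge0 v : 0 <= pV v. Proof. by apply: Rsum_ge0 => u _; apply: pUV_ge0. Qed.

Lemma pUV_le_pV u v : pUV u v <= pV v.
Proof. exact: (Rsum_term_le (f := fun u => pUV u v) u (fun u => pUV_ge0 u v)). Qed.

Lemma pUV_sum1 : \big[Rplus/0]_(u : U) \big[Rplus/0]_(v : V) pUV u v = 1.
Proof.
case: hpU => _ <-; apply: eq_bigr => u _.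
by rewrite /pUV -big_distrr /=; case: (hW u) => _; rewrite /rsum => ->; ring.
Qed.

Lemma pUV_gt0_inv u v : 0 < pUV u v -> 0 < pU u /\ 0 < W u v /\ 0 < pV v.
Proof.
move=> h; have := pU_ge0 u; have := W_ge0 u v; have := pUV_le_pV u v.
rewrite /pUV in h * => h1 h2 h3.
have hu : 0 < pU u by case: (Rle_lt_or_eq_dec _ _ h3) => // e; rewrite -e in h; nra.
have hw : 0 < W u v by case: (Rle_lt_or_eq_dec _ _ h2) => // e; rewrite -e in h; nra.
by do ! split => //; nra.
Qed.

Lemma pUV_support : exists u v, 0 < pUV u v.
Proof.
apply: NNPP => none; have := pUV_sum1.
rewrite big1 => [|u _]; first lra.
rewrite big1 // => v _.
by case: (Rle_lt_or_eq_dec _ _ (pUV_ge0 u v)) => // h; case: none; exists u, v.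
Qed.

Lemma Zrv_gt0 u v : 0 < pUV u v -> 0 < Z u v.
Proof.
move=> /pUV_gt0_inv [h1 [h2 h3]].
apply: Rmult_lt_0_compat; first exact: Rpower_gt0.
by apply: Rdiv_lt_0_compat => //; [rewrite /pUV; nra | nra].
Qed.

Lemma Zrv_pV u v : 0 < pUV u v -> Z u v * pV v = Rpower 2 (- R0) * W u v.
Proof. by move=> /pUV_gt0_inv [h1 [h2 h3]]; rewrite /Zrv /pUV; field; lra. Qed.

Lemma EZpow_0 : EZpow pU W R0 0 = 1.
Proof.
rewrite /EZpow /rsum -[RHS]pUV_sum1; apply: eq_bigr => u _; apply: eq_bigr => v _.
by rewrite Rpower_0_r Rmult_1_r.
Qed.

Lemma EZpow_gt0 b : 0 < EZpow pU W R0 b.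
Proof.
have [u [v h]] := pUV_support.
have term0 u' v' : 0 <= pUV u' v' * Rpower (Z u' v') b.
  by apply: Rmult_le_pos; [exact: pUV_ge0 | exact/Rlt_le/Rpower_gt0].
apply: Rlt_le_trans (Rsum_term_le
   (f := fun u => \big[Rplus/0]_(v : V) (pUV u v * Rpower (Z u v) b)) u _); last first.
  by move=> u'; apply: Rsum_ge0 => v' _.
apply: Rlt_le_trans (Rsum_term_le (f := fun v => pUV u v * Rpower (Z u v) b) v _) => //.
by apply: Rmult_lt_0_compat => //; exact: Rpower_gt0.
Qed.

(* ψ_b(v) = Φ_V(v) Σ_u Φ_UV(u,v) Z(u,v)^b = Φ_V(v)^2 E[Z^b | V = v]; the
   second exponent of γ is Σ_v sqrt ψ_{1-β'}(v). *)
Definition psiV (b : R) (v : V) : R :=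
  \big[Rplus/0]_(u : U) (pV v * pUV u v * Rpower (Z u v) b).

Lemma psiV_ge0 b v : 0 <= psiV b v.
Proof.
apply: Rsum_ge0 => u _; apply: Rmult_le_pos; last exact/Rlt_le/Rpower_gt0.
by apply: Rmult_le_pos; [exact: pV_ge0 | exact: pUV_ge0].
Qed.

Lemma ESqrtZ_psiV b' : ESqrtZ pU W R0 b' = \big[Rplus/0]_(v : V) sqrt (psiV (1 - b') v).
Proof.
rewrite /ESqrtZ /rsum; apply: eq_bigr => v _.
case: (Rle_lt_or_eq_dec _ _ (pV_ge0 v)) => hv; last first.
  by rewrite -hv Rmult_0_l /psiV big1 ?sqrt_0 // => u _; rewrite -hv; ring.
have -> : psiV (1 - b') v = pV v ^ 2 *
    \big[Rplus/0]_(u : U) (pUV u v / pV v * Rpower (Z u v) (1 - b')).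
  by rewrite big_distrr /psiV; apply: eq_bigr => u _ /=; field; lra.
by rewrite sqrt_mult_alt ?sqrt_pow2 //; [lra | apply: pow2_ge_0].
Qed.

Lemma ESqrtZ_gt0 b' : 0 < ESqrtZ pU W R0 b'.
Proof.
have [u [v h]] := pUV_support.
rewrite ESqrtZ_psiV.
apply: Rlt_le_trans (Rsum_term_le (f := fun v => sqrt (psiV (1 - b') v)) v _); last first.
  by move=> v'; apply: sqrt_pos.
apply: sqrt_lt_R0.
have term0 u' : 0 <= pV v * pUV u' v * Rpower (Z u' v) (1 - b').
  apply: Rmult_le_pos; last exact/Rlt_le/Rpower_gt0.
  by apply: Rmult_le_pos; [exact: pV_ge0 | exact: pUV_ge0].
apply: Rlt_le_trans (Rsum_term_le
  (f := fun u => pV v * pUV u v * Rpower (Z u v) (1 - b')) u term0).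
have := pUV_le_pV u v; have := Rpower_gt0 (Z u v) (1 - b') => h1 h2.
by apply: Rmult_lt_0_compat => //; apply: Rmult_lt_0_compat => //; lra.
Qed.

Lemma ESqrtZ_1 : ESqrtZ pU W R0 1 = 1.
Proof.
rewrite /ESqrtZ /rsum.
transitivity (\big[Rplus/0]_(v : V) pV v); last first.
  by rewrite /pV /rsum exchange_big /=; exact: pUV_sum1.
apply: eq_bigr => v _.
case: (Rle_lt_or_eq_dec _ _ (pV_ge0 v)) => hv; last by rewrite -hv !Rmult_0_l.
rewrite (eq_bigr (fun u => / pV v * pUV u v)); last first.
  by move=> u _; rewrite Rminus_diag Rpower_0_r; rewrite /Rdiv; ring.
rewrite -big_distrr /= (_ : / pV v * \big[Rplus/0]_(u : U) pUV u v = 1) ?sqrt_1 ?Rmult_1_r //.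
by rewrite /pV /rsum in hv *; field; lra.
Qed.

(* The log-moment E[ln Z] = ln 2 · (I(U;V) - R): this is the slope of
   β ↦ E Z^β at β = 0. *)
Lemma E_ln_Zrv : \big[Rplus/0]_(u : U) \big[Rplus/0]_(v : V) (pUV u v * ln (Z u v))
  = ln 2 * (mutinfo pU W - R0).
Proof.
have l2 := ln2_gt0.
pose info u v := if Rlt_dec 0 (pUV u v) then pUV u v * log2 (pUV u v / (pU u * pV v)) else 0.
transitivity (\big[Rplus/0]_(u : U) \big[Rplus/0]_(v : V) (ln 2 * (info u v - R0 * pUV u v))).
  apply: eq_bigr => u _; apply: eq_bigr => v _; rewrite /info.
  case: Rlt_dec => h /=; last first.
    have -> : pUV u v = 0 by have := pUV_ge0 u v; lra.
    ring.
  have [h1 [h2 h3]] := pUV_gt0_inv h.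
  rewrite /Zrv ln_mult ?ln_Rpower /log2 /=; first by field; lra.
    exact: Rpower_gt0.
  by apply: Rdiv_lt_0_compat => //; apply: Rmult_lt_0_compat.
under eq_bigr do rewrite -big_distrr /=.
rewrite -big_distrr /=; congr (_ * _).
under eq_bigr do rewrite Rsum_sub -big_distrr /=.
by rewrite Rsum_sub -big_distrr /= pUV_sum1 Rmult_1_r.
Qed.

End SingleLetter.

Section BlockLength.
Variables (U V : finType) (pU : U -> R) (W : U -> V -> R) (R0 : R) (n : nat).
Hypotheses (hpU : is_pmf pU) (hW : is_channel W).

Local Notation pUV := (pUV pU W).
Local Notation pV := (pV pU W).
Local Notation Z := (Zrv pU W R0).
Local Notation M := (cbsize R0 n).

Definition pn (x : {ffun 'I_n -> U}) : R := \big[Rmult/1]_(t < n) pU (x t).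
Definition wn (x : {ffun 'I_n -> U}) (y : {ffun 'I_n -> V}) : R :=
  \big[Rmult/1]_(t < n) W (x t) (y t).
Definition zn (x : {ffun 'I_n -> U}) (y : {ffun 'I_n -> V}) : R :=
  \big[Rmult/1]_(t < n) Z (x t) (y t).

Lemma pn_ge0 x : 0 <= pn x. Proof. by apply: Rprod_ge0 => t _; exact: (pU_ge0 hpU). Qed.
Lemma wn_ge0 x y : 0 <= wn x y. Proof. by apply: Rprod_ge0 => t _; exact: (W_ge0 hW). Qed.
Lemma QVn_ge0 (y : {ffun 'I_n -> V}) : 0 <= QVn pU W y.
Proof. by apply: Rprod_ge0 => t _; exact: (pV_ge0 hpU hW). Qed.

Lemma pn_sum1 : \big[Rplus/0]_(x : {ffun 'I_n -> U}) pn x = 1.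
Proof.
rewrite /pn -(bigA_distr_bigA (fun (t : 'I_n) (u : U) => pU u)) /=.
by rewrite big1 // => t _; case: hpU.
Qed.

Lemma pn_wn x y : pn x * wn x y = \big[Rmult/1]_(t < n) pUV (x t) (y t).
Proof. by rewrite /pn /wn -big_split. Qed.

Lemma pn_wn_ge0 x y : 0 <= pn x * wn x y.
Proof. exact: Rmult_le_pos (pn_ge0 x) (wn_ge0 x y). Qed.

Lemma QVn_mean y : QVn pU W y = \big[Rplus/0]_(x : {ffun 'I_n -> U}) (pn x * wn x y).
Proof.
rewrite (eq_bigr (fun x : {ffun 'I_n -> U} => \big[Rmult/1]_(t < n) pUV (x t) (y t))).
  by rewrite -(bigA_distr_bigA (fun t u => pUV u (y t))).
by move=> x _; rewrite pn_wn.
Qed.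

Lemma pn_wn_gt0_letter x y : 0 < pn x * wn x y -> forall t, 0 < pUV (x t) (y t).
Proof. by rewrite pn_wn; apply: Rprod_gt0_factor => t; exact: pUV_ge0. Qed.

Lemma zn_gt0 x y : 0 < pn x * wn x y -> 0 < zn x y.
Proof. by move=> h; apply: Rprod_gt0 => t _; apply: Zrv_gt0 (pn_wn_gt0_letter h t). Qed.

Lemma zn_QVn x y : 0 < pn x * wn x y -> zn x y * QVn pU W y = Rpower 2 (- R0) ^ n * wn x y.
Proof.
move=> h; rewrite /zn /QVn -big_split.
rewrite (eq_bigr (fun t => Rpower 2 (- R0) * W (x t) (y t))) ?big_split ?Rprod_const //.
by move=> t _; apply: Zrv_pV (pn_wn_gt0_letter h t).
Qed.

Lemma E_zn_pow b :
  \big[Rplus/0]_(x : {ffun 'I_n -> U}) \big[Rplus/0]_(y : {ffun 'I_n -> V})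
    (pn x * wn x y * Rpower (zn x y) b) = EZpow pU W R0 b ^ n.
Proof.
pose F u v := pUV u v * Rpower (Z u v) b.
rewrite -Rprod_const /EZpow /rsum -/F.
rewrite bigA_distr_bigA /=; apply: eq_bigr => x _.
rewrite bigA_distr_bigA /=; apply: eq_bigr => y _.
rewrite pn_wn /zn (Rprod_mul_Rpower (p := fun t => pUV (x t) (y t))) //.
  by move=> t; apply: pUV_ge0.
by move=> t; apply: Zrv_gt0.
Qed.

Lemma psiV_prod b y :
  \big[Rplus/0]_(x : {ffun 'I_n -> U}) (QVn pU W y * (pn x * wn x y) * Rpower (zn x y) b)
  = \big[Rmult/1]_(t < n) psiV pU W R0 b (y t).
Proof.
rewrite /psiV bigA_distr_bigA /=; apply: eq_bigr => x _.
rewrite pn_wn /QVn -big_split /zn (Rprod_mul_Rpower (p := fun t => pV (y t) * pUV (x t) (y t))) //.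
  by move=> t; have := pV_ge0 hpU hW (y t); have := pUV_ge0 hpU hW (x t) (y t); nra.
move=> t ht; apply: Zrv_gt0 => //.
case: (Rle_lt_or_eq_dec _ _ (pUV_ge0 hpU hW (x t) (y t))) => // e; rewrite -e in ht; nra.
Qed.

Lemma cbsize_ge : Rpower 2 (INR n * R0) <= INR M /\ 0 < INR M.
Proof.
rewrite /cbsize /ceilZ.
set x := Rpower 2 (INR n * R0).
have x0 : 0 < x by exact: Rpower_gt0.
have [h1 h2] := archimed (- x).
set z := up (- x) in h1 h2 *.
have hz : x <= IZR (- (z - 1)) by rewrite opp_IZR minus_IZR; lra.
have hz0 : (0 <= - (z - 1))%Z by apply: le_IZR; lra.
by rewrite INR_IZR_INZ Z2Nat.id //; lra.
Qed.

Lemma inv_cbsize_le : / INR M <= Rpower 2 (- R0) ^ n.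
Proof.
have [hM1 hM0] := cbsize_ge.
rewrite -Rpower_pow ?Rpower_mult; last exact: Rpower_gt0.
rewrite (_ : - R0 * INR n = - (INR n * R0)); last ring.
by rewrite Rpower_Ropp; apply: Rinv_le_contravar => //; exact: Rpower_gt0.
Qed.


Lemma ETV_Ecb : ETV pU W R0 n = Ecb pn (fun c : {ffun 'I_M -> {ffun 'I_n -> U}} =>
  / 2 * \big[Rplus/0]_(y : {ffun 'I_n -> V})
          Rabs (/ INR M * \big[Rplus/0]_(j < M) wn (c j) y - QVn pU W y)).
Proof. by []. Qed.

Definition below (tau : R) (x : {ffun 'I_n -> U}) (y : {ffun 'I_n -> V}) : bool :=
  if Rle_dec (zn x y) tau then true else false.

Lemma atypical_mass b tau : 0 < b -> 0 < tau ->
  \big[Rplus/0]_(x : {ffun 'I_n -> U}) \big[Rplus/0]_(y : {ffun 'I_n -> V})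
    (if below tau x y then 0 else pn x * wn x y)
  <= EZpow pU W R0 b ^ n * / Rpower tau b.
Proof.
move=> hb ht.
have itb : 0 < / Rpower tau b by apply/Rinv_0_lt_compat/Rpower_gt0.
rewrite -E_zn_pow Rmult_comm big_distrr; apply: Rsum_le => x _.
rewrite big_distrr; apply: Rsum_le => y _ /=.
have hP := pn_wn_ge0 x y.
rewrite /below; case: Rle_dec => hz /=.
  by apply: Rmult_le_pos; [lra | apply: Rmult_le_pos => //; exact/Rlt_le/Rpower_gt0].
have ratio : 1 <= Rpower (zn x y) b * / Rpower tau b.
  rewrite -(Rinv_r (Rpower tau b)); last exact/Rgt_not_eq/Rpower_gt0.
  by apply: Rmult_le_compat_r; [lra | apply: Rle_Rpower_l; lra].
have -> : / Rpower tau b * (pn x * wn x y * Rpower (zn x y) b)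
  = (pn x * wn x y) * (Rpower (zn x y) b * / Rpower tau b) by ring.
nra.
Qed.

(* Second-moment step, pointwise: on {z <= τ},
   wn^2 / M <= 2^{-nR} wn^2 = z Q wn <= τ^{β'} z^{1-β'} Q wn. *)
Lemma typical_pair_bound b' tau x y : 0 <= b' -> 0 < tau ->
  / INR M * (if below tau x y then pn x * wn x y ^ 2 else 0)
  <= Rpower tau b' * (QVn pU W y * (pn x * wn x y) * Rpower (zn x y) (1 - b')).
Proof.
move=> hb' ht.
have hP := pn_wn_ge0 x y.
have hQ := QVn_ge0 y.
have hrhs : 0 <= Rpower tau b' * (QVn pU W y * (pn x * wn x y) * Rpower (zn x y) (1 - b')).
  have := Rpower_gt0 tau b'; have := Rpower_gt0 (zn x y) (1 - b'); move=> h1 h2.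
  apply: Rmult_le_pos; first lra.
  by apply: Rmult_le_pos; [nra | lra].
rewrite /below; case: Rle_dec => hz; cbv beta iota; last by rewrite Rmult_0_r.
case: (Rle_lt_or_eq_dec _ _ hP) => hP'; last first.
  have -> : / INR M * (pn x * wn x y ^ 2) = / INR M * (pn x * wn x y) * wn x y by ring.
  by rewrite -{1}hP' Rmult_0_r Rmult_0_l.
have hiM : 0 < / INR M by apply/Rinv_0_lt_compat; case: cbsize_ge.
have size_step : / INR M * (pn x * wn x y ^ 2) <= (pn x * wn x y) * (zn x y * QVn pU W y).
  rewrite zn_QVn // (_ : pn x * wn x y * (Rpower 2 (- R0) ^ n * wn x y)
    = Rpower 2 (- R0) ^ n * (pn x * wn x y ^ 2)); last ring.
  by apply: Rmult_le_compat_r; [have := wn_ge0 x y; nra | exact: inv_cbsize_le].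
have threshold_step : zn x y <= Rpower tau b' * Rpower (zn x y) (1 - b').
  have zp := zn_gt0 hP'.
  rewrite -{1}(Rpower_1 (zn x y)) // -{1}(_ : b' + (1 - b') = 1); last ring.
  rewrite Rpower_plus; apply: Rmult_le_compat_r; first exact/Rlt_le/Rpower_gt0.
  by apply: Rle_Rpower_l; lra.
apply: Rle_trans size_step _.
rewrite (_ : Rpower tau b' * (QVn pU W y * (pn x * wn x y) * Rpower (zn x y) (1 - b'))
  = (pn x * wn x y * QVn pU W y) * (Rpower tau b' * Rpower (zn x y) (1 - b'))); last ring.
rewrite (_ : pn x * wn x y * (zn x y * QVn pU W y) = (pn x * wn x y * QVn pU W y) * zn x y); last ring.
by apply: Rmult_le_compat_l => //; nra.
Qed.

Lemma typical_term b' tau : 0 <= b' -> 0 < tau ->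
  \big[Rplus/0]_(y : {ffun 'I_n -> V}) sqrt (/ INR M *
     \big[Rplus/0]_(x : {ffun 'I_n -> U}) (if below tau x y then pn x * wn x y ^ 2 else 0))
  <= Rpower tau (b' / 2) * ESqrtZ pU W R0 b' ^ n.
Proof.
move=> hb' ht.
have sqrt_tau : sqrt (Rpower tau b') = Rpower tau (b' / 2).
  rewrite -{1}(Rplus_half_diag b') Rpower_plus sqrt_square //; exact/Rlt_le/Rpower_gt0.
rewrite (ESqrtZ_psiV R0 hpU hW) -Rprod_const bigA_distr_bigA big_distrr /=.
apply: Rsum_le => y _; rewrite -sqrt_tau -sqrt_Rprod; last by move=> t _; apply: psiV_ge0.
rewrite -sqrt_mult_alt; last exact/Rlt_le/Rpower_gt0.
apply: sqrt_le_1_alt; rewrite -psiV_prod !big_distrr /=.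
by apply: Rsum_le => x _; apply: typical_pair_bound.
Qed.

Lemma ETV_threshold_bound b b' tau : 0 < b -> 0 <= b' -> 0 < tau ->
  ETV pU W R0 n <= EZpow pU W R0 b ^ n * / Rpower tau b
     + / 2 * (Rpower tau (b' / 2) * ESqrtZ pU W R0 b' ^ n).
Proof.
move=> hb hb' ht.
have [_ hM0] := cbsize_ge.
rewrite ETV_Ecb; apply: Rle_trans (expected_tv_split pn_ge0 pn_sum1 hM0 (below tau)
  wn_ge0 QVn_mean) _.
apply: Rplus_le_compat; first exact: atypical_mass.
by apply: Rmult_le_compat_l; [lra | exact: typical_term].
Qed.

(* The trivial bound, from the same split with an empty typical set. *)
Lemma ETV_le1 : ETV pU W R0 n <= 1.
Proof.
have [_ hM0] := cbsize_ge.
rewrite ETV_Ecb; apply: Rle_trans (expected_tv_split pn_ge0 pn_sum1 hM0 (fun _ _ => false)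
  wn_ge0 QVn_mean) _ => /=.
rewrite [X in _ + / 2 * X]big1 => [|y _]; last by rewrite big1 // Rmult_0_r sqrt_0.
have := E_zn_pow 0; rewrite (EZpow_0 R0 hpU hW) pow1 => <-.
rewrite Rmult_0_r Rplus_0_r; apply: Req_le; apply: eq_bigr => x _; apply: eq_bigr => y _.
by rewrite Rpower_0_r Rmult_1_r.
Qed.

End BlockLength.

(* Choosing τ = exp(2n (ln a - ln c) / (2β + β')) balances the two terms of
   ETV_threshold_bound: each becomes 2^{-γ n}, with γ the objective of the
   statement at (β, β'). *)
Lemma balanced_threshold (a c b b' : R) (n : nat) : 0 < a -> 0 < c -> 0 < b -> 0 <= b' ->
  exists tau, 0 < tau /\
  a ^ n * / Rpower tau b + / 2 * (Rpower tau (b' / 2) * c ^ n)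
  = 3 / 2 * Rpower 2 (- (/ (2 * b + b') * (- b' * log2 a - 2 * b * log2 c) * INR n)).
Proof.
move=> ha hc hb hb'.
have l2 := ln2_gt0.
set L := 2 * INR n / (2 * b + b') * (ln a - ln c).
exists (exp L); split; first exact: exp_pos.
rewrite -!Rpower_pow // /Rpower !ln_exp /log2.
set E := - (/ (2 * b + b') * (- b' * (ln a / ln 2) - 2 * b * (ln c / ln 2)) * INR n) * ln 2.
have first_term : INR n * ln a - b * L = E by rewrite /E /L; field; lra.
have second_term : b' / 2 * L + INR n * ln c = E by rewrite /E /L; field; lra.
rewrite -exp_Ropp -!exp_plus (_ : INR n * ln a + - (b * L) = E) ?second_term; first lra.
by rewrite -first_term.
Qed.

Lemma soft_covering_exponent (U V : finType) (pU : U -> R) (W : U -> V -> R) (R0 : R) :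
  is_pmf pU -> is_channel W ->
  forall (n : nat) (b b' : R), 0 <= b -> 0 <= b' -> (b, b') <> (0, 0) ->
     ETV pU W R0 n <= 3 / 2 * Rpower 2 (- (gammaf pU W R0 b b' * INR n)).
Proof.
move=> hpU hW n b b' hb hb' hne.
case: (Rle_lt_or_eq_dec _ _ hb) => [b_gt0 | <-].
  have [tau [ht <-]] := balanced_threshold n (EZpow_gt0 R0 hpU hW b) (ESqrtZ_gt0 R0 hpU hW b')
    b_gt0 hb'.
  exact: ETV_threshold_bound.
(* β = 0 gives γ = 0, where the bound is the trivial ETV <= 1. *)
have -> : gammaf pU W R0 0 b' = 0.
  by rewrite /gammaf (EZpow_0 R0 hpU hW) /log2 ln_1 /Rdiv !Rmult_0_l; ring.
rewrite Rmult_0_l Ropp_0 Rpower_0_r.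
by have := ETV_le1 R0 n hpU hW; lra.
Qed.

Lemma derivable_pt_lim_Rsum (I : Type) (r : seq I) (P : pred I) (g : I -> R -> R) (dg : I -> R) x :
  (forall i, derivable_pt_lim (g i) x (dg i)) ->
  derivable_pt_lim (fun y => \big[Rplus/0]_(i <- r | P i) g i y) x (\big[Rplus/0]_(i <- r | P i) dg i).
Proof.
move=> h; elim: r => [|i r IH].
  rewrite big_nil (_ : (fun y => _) = fun _ => 0); first exact: derivable_pt_lim_const.
  by apply: functional_extensionality => y; rewrite big_nil.
rewrite big_cons (_ : (fun y => _) =
   fun y => (if P i then g i y else 0) + \big[Rplus/0]_(j <- r | P j) g j y); last first.
  by apply: functional_extensionality => y; rewrite big_cons; case: (P i) => //; ring.
case: (P i); first exact: derivable_pt_lim_plus.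
rewrite -(Rplus_0_l (\big[Rplus/0]_(j <- r | P j) dg j)).
exact: derivable_pt_lim_plus (derivable_pt_lim_const 0 x) IH.
Qed.

(* d/dβ p z^β = p ln z at β = 0 (here z^β = exp(β ln z)). *)
Lemma derivable_pt_lim_exp_scale (p L : R) : derivable_pt_lim (fun b => p * exp (b * L)) 0 (p * L).
Proof.
have lin : derivable_pt_lim (fun b => b * L) 0 (1 * L).
  exact: derivable_pt_lim_scal_right id 0 1 L (derivable_pt_lim_id 0).
have := derivable_pt_lim_scal _ p _ _
  (derivable_pt_lim_comp (fun b => b * L) exp 0 _ _ lin (derivable_pt_lim_exp _)).
by rewrite Rmult_0_l exp_0 !Rmult_1_l.
Qed.

Lemma neg_derivative_descent (f : R -> R) l : derivable_pt_lim f 0 l -> l < 0 ->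
  exists h, 0 < h /\ f h < f 0.
Proof.
move=> hd hl.
have [d hdel] := hd (- l / 2) ltac:(lra).
have dp := cond_pos d.
exists (d / 2); split; first lra.
have := hdel (d / 2) ltac:(lra) ltac:(rewrite Rabs_pos_eq; lra).
rewrite Rplus_0_l => hh.
have quotient_neg : (f (d / 2) - f 0) / (d / 2) < 0 by move: hh; split_Rabs; lra.
have : f (d / 2) - f 0 < 0.
  apply: (Rmult_lt_reg_r (/ (d / 2))); first by apply: Rinv_0_lt_compat; lra.
  by rewrite Rmult_0_l.
lra.
Qed.

(* Above the mutual information, some β > 0 has E Z^β < 1: the map
   β ↦ E Z^β equals 1 at 0 with slope ln 2 (I(U;V) - R) < 0. *)
Lemma EZpow_lt1 (U V : finType) (pU : U -> R) (W : U -> V -> R) (R0 : R) :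
  is_pmf pU -> is_channel W -> R0 > mutinfo pU W ->
  exists b, 0 < b /\ EZpow pU W R0 b < 1.
Proof.
move=> hpU hW hR.
have slope : derivable_pt_lim (fun b => EZpow pU W R0 b) 0 (ln 2 * (mutinfo pU W - R0)).
  rewrite -(E_ln_Zrv R0 hpU hW) /EZpow /rsum.
  by apply: derivable_pt_lim_Rsum => u; apply: derivable_pt_lim_Rsum => v;
    exact: derivable_pt_lim_exp_scale.
have [b [hb hlt]] := neg_derivative_descent slope ltac:(have := ln2_gt0; nra).
by exists b; rewrite -(EZpow_0 R0 hpU hW).
Qed.

(* Hence γ(β, 1) > 0 and the expected total variation decays geometrically. *)
Lemma soft_covering_vanishes (U V : finType) (pU : U -> R) (W : U -> V -> R) (R0 : R) :
  is_pmf pU -> is_channel W -> R0 > mutinfo pU W -> Un_cv (ETV pU W R0) 0.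
Proof.
move=> hpU hW hR.
have l2 := ln2_gt0.
have [b [hb ha]] := EZpow_lt1 hpU hW hR.
have ln_a : ln (EZpow pU W R0 b) < 0 by rewrite -ln_1; apply: ln_increasing => //; exact: EZpow_gt0.
set g := gammaf pU W R0 b 1.
have g_gt0 : 0 < g.
  rewrite /g /gammaf (ESqrtZ_1 R0 hpU hW) /log2 ln_1.
  rewrite (_ : / (2 * b + 1) * (- (1) * (ln (EZpow pU W R0 b) / ln 2) - 2 * b * (0 / ln 2))
    = - ln (EZpow pU W R0 b) / (ln 2 * (2 * b + 1))); last by field; lra.
  by apply: Rdiv_lt_0_compat; [lra | apply: Rmult_lt_0_compat; lra].
set r := Rpower 2 (- g).
have r_bounds : 0 < r < 1.
  by split; [exact: Rpower_gt0 | rewrite /r /Rpower -exp_0; apply: exp_increasing; nra].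
have geometric m : 0 <= ETV pU W R0 m <= 3 / 2 * r ^ m.
  split.
    apply: Rsum_ge0 => c _; apply: Rmult_le_pos; first exact: (cwprob_ge0 (pn_ge0 hpU)).
    by apply: Rmult_le_pos; [lra | apply: Rsum_ge0 => y _; exact: Rabs_pos].
  rewrite /r -Rpower_pow ?Rpower_mult; last exact: Rpower_gt0.
  rewrite (_ : - g * INR m = - (g * INR m)); last ring.
  by apply: soft_covering_exponent => //; [lra | lra | case; lra].
move=> eps he.
have [N HN] := pow_lt_1_zero r ltac:(rewrite Rabs_pos_eq; lra) (eps * (2 / 3)) ltac:(lra).
exists N => m hm; have [ETV0 ETV_le] := geometric m; have := HN m hm.
rewrite /R_dist Rminus_0_r !Rabs_pos_eq //; first lra.
by apply: pow_le; lra.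
Qed.

Theorem mainTheorem3 (U V : finType) (pU : U -> R) (W : U -> V -> R) (R0 : R) :
  is_pmf pU -> is_channel W -> 0 <= R0 ->
  (R0 > mutinfo pU W -> Un_cv (ETV pU W R0) 0) /\
  (forall (n : nat) (b b' : R), 0 <= b -> 0 <= b' -> (b, b') <> (0, 0) ->
     ETV pU W R0 n <= 3 / 2 * Rpower 2 (- (gammaf pU W R0 b b' * INR n))).
Proof.
move=> hpU hW _; split.
- exact: soft_covering_vanishes.
- exact: soft_covering_exponent.
Qed.
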